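(* Let $K\ge 2$, $\mathbf{V}\in\mathbb{C}^{n\times r}$, $i\in[n]$, and $\boldsymbol{\phi}^*\in\mathcal{H}_r$. If two distinct hypersurfaces from coordinate group $i$, i.e. $\mathcal{H}_{i,m_1}$ and $\mathcal{H}_{i,m_2}$ with $m_1\ne m_2$ in $\{0,\dots,B_K-1\}$, both contain $\boldsymbol{\phi}^*$, then $\mathbf{V}_{i,:}\mathbf{c}(\boldsymbol{\phi}^* )=0$, and consequently all $B_K$ hypersurfaces $\mathcal{H}_{i,0},\dots,\mathcal{H}_{i,B_K-1}$ contain $\boldsymbol{\phi}^*$.
   Context: $B_K=K/2$ if $K$ is even and $B_K=K$ if $K$ is odd; $\vartheta_m=\pi(2m+1)/K$. $\mathcal{H}_r=(-\pi/2,\pi/2]^{2r-2}\times(-\pi/K,\pi/K]$. For $\boldsymbol{\phi}\in\mathcal{H}_r$, $\tilde{\mathbf{c}}(\boldsymbol{\phi})\in\mathbb{R}^{2r}$ is given by $\tilde c_1=\sin\phi_1$, $\tilde c_k=(\prod_{l<k}\cos\phi_l)\sin\phi_k$ for $2\le k\le 2r-1$, $\tilde c_{2r}=(\prod_{l=1}^{2r-2}\cos\phi_l)\cos\phi_{2r-1}$, and $\mathbf{c}(\boldsymbol{\phi})\in\mathbb{C}^r$ by $c_j=\tilde c_{2j}+\mathrm{i}\tilde c_{2j-1}$. The hypersurface for coordinate $i$ and boundary index $m$ is $\mathcal{H}_{i,m}=\{\boldsymbol{\phi}\in\mathcal{H}_r:\mathrm{Im}(e^{-\mathrm{i}\vartheta_m}\mathbf{V}_{i,:}\mathbf{c}(\boldsymbol{\phi}))=0\}$.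 *)

From HB Require Import structures.
From mathcomp Require Import all_boot all_order all_algebra.
From mathcomp Require Import complex.
From mathcomp Require Import reals trigo.
Set Implicit Arguments. Unset Strict Implicit. Unset Printing Implicit Defensive.
Import Order.TTheory GRing.Theory Num.Theory.
Local Open Scope ring_scope.

Section Defs.
Variable R : realType.

Definition BK (K : nat) : nat := if odd K then K else K./2.

Definition theta (K m : nat) : R := pi * (m.*2.+1)%:R / K%:R.

(* 1-indexed access phi_k (k = 1 .. 2r-1) to phi : 'rV_(2r-1);
   (out-of-range indices are never used) *)
Definition phiAt (r : nat) (phi : 'rV[R]_(r.*2.-1)) (k : nat) : R :=
  match @insub _ (fun j => j < r.*2.-1)%N _ k.-1 with
  | Some j => phi 0 j
  | None => 0
  end.

Definition in_Hr (K r : nat) (phi : 'rV[R]_(r.*2.-1)) : Prop :=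
  (forall k : 'I_(r.*2.-1), (k < r.*2.-2)%N ->
     - (pi / 2) < phi 0 k /\ phi 0 k <= pi / 2) /\
  (forall k : 'I_(r.*2.-1), (k = r.*2.-2 :> nat) ->
     - (pi / K%:R) < phi 0 k /\ phi 0 k <= pi / K%:R).

(* tilde c_k, 1-indexed, k = 1 .. 2r *)
Definition ctilde (r : nat) (phi : 'rV[R]_(r.*2.-1)) (k : nat) : R :=
  if k == r.*2 then
    (\prod_(1 <= l < r.*2.-1) cos (phiAt phi l)) * cos (phiAt phi r.*2.-1)
  else
    (\prod_(1 <= l < k) cos (phiAt phi l)) * sin (phiAt phi k).

(* c_j = tilde c_{2j} + i tilde c_{2j-1}, j = 1..r (stored 0-indexed) *)
Definition cvec (r : nat) (phi : 'rV[R]_(r.*2.-1)) : 'cV[R[i]]_r :=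
  \col_(j < r) ((ctilde phi (j.+1).*2) +i* (ctilde phi (j.+1).*2.-1))%C.

Definition Vrow_c (n r : nat) (V : 'M[R[i]]_(n, r)) (i : 'I_n)
  (phi : 'rV[R]_(r.*2.-1)) : R[i] :=
  \sum_(j < r) V i j * cvec phi j 0.

Definition expmi (t : R) : R[i] := (cos t +i* (- sin t))%C.

Definition in_Him (K n r : nat) (V : 'M[R[i]]_(n, r)) (i : 'I_n) (m : nat)
  (phi : 'rV[R]_(r.*2.-1)) : Prop :=
  in_Hr K phi /\ complex.Im (expmi (theta K m) * Vrow_c V i phi) = 0.

End Defs.

(* Im (e^{-i t} z) = 0 says that z lies on the real line through 0 with
   direction e^{i t}.  For m1 <> m2 below B_K the directions theta_m1 and
   theta_m2 differ by 2 pi (m1 - m2) / K, which is not a multiple of pi, so the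
   two lines meet only at 0 and V_{i,:} c(phi) = 0; and 0 lies on every line. *)
From HB Require Import structures.
From mathcomp Require Import all_boot all_order all_algebra.
From mathcomp Require Import complex.
From mathcomp Require Import reals trigo.
From mathcomp Require Import ring lra zify.
Set Implicit Arguments. Unset Strict Implicit. Unset Printing Implicit Defensive.
Import Order.TTheory GRing.Theory Num.Theory.
Local Open Scope ring_scope.

Section RotatedLines.
Variable R : realType.

Lemma Im_expmi_mul (t : R) (z : R[i]) :
  complex.Im (expmi t * z) = cos t * complex.Im z - sin t * complex.Re z.
Proof. by case: z => a b; rewrite /expmi /=; ring. Qed.

Lemma eq0_of_Im_expmi_mul (t1 t2 : R) (z : R[i]) :
  sin (t1 - t2) != 0 ->
  complex.Im (expmi t1 * z) = 0 -> complex.Im (expmi t2 * z) = 0 -> z = 0.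
Proof.
rewrite sinB !Im_expmi_mul; case: z => a b /= hs h1 h2.
set s := sin t1 * cos t2 - cos t1 * sin t2 in hs.
(* Cramer's rule: s is the determinant of the 2x2 system h1, h2 in (a, b). *)
have sa : a * s = cos t1 * (cos t2 * b - sin t2 * a)
                  - cos t2 * (cos t1 * b - sin t1 * a) by rewrite /s; ring.
have sb : b * s = sin t1 * (cos t2 * b - sin t2 * a)
                  - sin t2 * (cos t1 * b - sin t1 * a) by rewrite /s; ring.
rewrite h1 h2 !mulr0 subr0 in sa sb.
move/eqP: sa; move/eqP: sb; rewrite !mulf_eq0 (negbTE hs) !orbF.
by move=> /eqP-> /eqP->.
Qed.

Lemma sin_pi_mul_neq0 (q : R) : 0 < q < 2 -> q != 1 -> sin (pi * q) != 0.
Proof.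
move=> /andP[q0 q2] q1.
have pi0 : 0 < pi :> R by exact: pi_gt0.
case: (ltrgtP q 1) q1 => // hq _.
  apply: lt0r_neq0; apply: sin_gt0_pi; apply/andP; split; first exact: mulr_gt0.
  by rewrite -[X in _ < X]mulr1 ltr_pM2l.
have -> : pi * q = pi * (q - 1) + pi by ring.
rewrite sinDpi oppr_eq0; apply: lt0r_neq0; apply: sin_gt0_pi.
apply/andP; split; first by apply: mulr_gt0 => //; lra.
by rewrite -[X in _ < X]mulr1 ltr_pM2l //; lra.
Qed.

End RotatedLines.

Lemma thetaB (R : realType) (K m1 m2 : nat) : (m2 <= m1)%N ->
  theta R K m1 - theta R K m2 = pi * ((m1 - m2).*2%:R / K%:R).
Proof.
move=> le_m; rewrite /theta -!mulrA -mulrBr -mulrBl -natrB; last first.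
  by rewrite ltnS leq_double.
by rewrite subSS -doubleB.
Qed.

Lemma double_div_bounds (R : realType) (K d : nat) : (0 < d < BK K)%N ->
  let q : R := d.*2%:R / K%:R in 0 < q < 2 /\ q != 1.
Proof.
move=> hd q.
have [dK dK2 dKn] : [/\ (0 < d.*2)%N, (d.*2 < K.*2)%N & d.*2 != K].
  by move: hd; rewrite /BK; case: ifP => hK; split; lia.
have K0 : 0 < K%:R :> R by rewrite ltr0n; lia.
split; first (apply/andP; split).
- by rewrite /q divr_gt0 // ltr0n.
- by rewrite /q ltr_pdivrMr // -natrM ltr_nat mulnC muln2.
apply: contra dKn => /eqP q1.
by rewrite -(eqr_nat R) -[X in X == _](divfK (lt0r_neq0 K0)) -/q q1 mul1r.
Qed.

Lemma sin_thetaB_neq0 (R : realType) (K m1 m2 : nat) :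
  (m1 < BK K)%N -> (m2 < BK K)%N -> m1 != m2 ->
  sin (theta R K m1 - theta R K m2) != 0.
Proof.
wlog lt_m : m1 m2 / (m2 < m1)%N => [hwlog b1 b2 ne|b1 _ _].
  have [lt_m|lt_m|eq_m] := ltngtP m1 m2; last by rewrite eq_m eqxx in ne.
  - by rewrite -opprB sinN oppr_eq0 (hwlog m2 m1) // eq_sym.
  - exact: hwlog.
have [q_bounds q_neq1] := @double_div_bounds R K (m1 - m2) ltac:(lia).
by rewrite thetaB ?sin_pi_mul_neq0 // ltnW.
Qed.

Theorem corollary3 (R : realType) (K n r : nat) (V : 'M[R[i]]_(n, r))
  (i : 'I_n) (phi : 'rV[R]_(r.*2.-1)) (m1 m2 : nat) :
  (2 <= K)%N -> (1 <= r)%N ->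
  in_Hr K phi ->
  (m1 < BK K)%N -> (m2 < BK K)%N -> m1 <> m2 ->
  in_Him K V i m1 phi -> in_Him K V i m2 phi ->
  Vrow_c V i phi = 0 /\
  (forall m : nat, (m < BK K)%N -> in_Him K V i m phi).
Proof.
(* [2 <= K] already follows from [m1 <> m2] below [BK K]. *)
move=> _ _ hH b1 b2 /eqP ne [_ h1] [_ h2].
have z0 : Vrow_c V i phi = 0.
  exact: eq0_of_Im_expmi_mul (sin_thetaB_neq0 R b1 b2 ne) h1 h2.
by split=> // m _; split; rewrite // z0 mulr0.
Qed.
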